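(* Let $n \ge 2$. Let $\mathcal{W}_n$ be the set of weighted graphs on $n$ vertices with weights in $[0,1]$, identified with their weighted adjacency matrices, i.e. the set of $n\times n$ real symmetric matrices with all entries in $[0,1]$. Let $\mathcal{G}_n$ be the set of (unweighted, simple) graphs on $n$ vertices. Then \[ \min_{G \in \mathcal{G}_n} \lambda_{n-1}(G) - 2\sqrt{n} \le \inf_{G\in \mathcal{W}_n} \lambda_{n-1}(G). \]
   Context: For a real symmetric $n\times n$ matrix $M$ (in particular the adjacency matrix of a graph or weighted graph), $\lambda_k(M)$ denotes its $k$-th largest eigenvalue, counted with multiplicity, so $\lambda_1 \ge \lambda_2 \ge \dots \ge \lambda_n$. Weighted graphs may have loops (diagonal entries in $[0,1]$). *)

From HB Require Import structures.
From mathcomp Require Import all_boot all_order all_algebra.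
From mathcomp Require Import boolp classical_sets reals.
Set Implicit Arguments. Unset Strict Implicit. Unset Printing Implicit Defensive.
Import Order.TTheory GRing.Theory Num.Theory.
Local Open Scope ring_scope.

Definition is_spectrum (R : realType) (n : nat) (M : 'M[R]_n) (s : seq R) : Prop :=
  sorted (fun x y : R => y <= x) s /\ char_poly M = \prod_(x <- s) ('X - x%:P).

(* The spectrum of M (for real symmetric M it exists and is unique);
   defaults to [::] when the characteristic polynomial does not split over R. *)
Definition spectrum (R : realType) (n : nat) (M : 'M[R]_n) : seq R :=
  match pselect (exists s, is_spectrum M s) with
  | left H => proj1_sig (cid H)
  | right _ => [::]
  end.

(* lambda_k(M): the k-th largest eigenvalue (k is 1-indexed). *)
Definition lambda (R : realType) (n : nat) (k : nat) (M : 'M[R]_n) : R :=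
  nth 0 (spectrum M) k.-1.

Definition simple_graph (n : nat) (g : 'M[bool]_n) : bool :=
  (g^T == g) && [forall i, ~~ g i i].

Definition adj (R : realType) (n : nat) (g : 'M[bool]_n) : 'M[R]_n :=
  map_mx (fun b : bool => (b%:R : R)) g.

Definition empty_graph (n : nat) : 'M[bool]_n := const_mx false.

(* min over all simple graphs G on n vertices of lambda_k(G)
   (the empty graph, itself a simple graph, is used as the seed of the fold). *)
Definition min_graph_lambda (R : realType) (n k : nat) : R :=
  \big[Num.min/lambda k (adj R (empty_graph n))]_(g : 'M[bool]_n | simple_graph g)
     lambda k (adj R g).

Definition weighted_graphs (R : realType) (n : nat) : set 'M[R]_n :=
  [set W | W^T = W /\ forall i j, 0 <= W i j <= 1].

(* Let W be a weighted graph, mu = lambda_{n-1}(W), and let u_1, u_2 be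
   orthonormal eigenvectors of the two smallest eigenvalues of W.  Round the
   off-diagonal weights of W to 0 or 1 one edge at a time, always choosing the
   value that does not increase the squared error of the four numbers
   u_a^* G u_b; by averaging, the final error is at most 2, independently of n.
   Courant-Fischer for the resulting graph G yields a nonzero x in
   span(u_1, u_2) with lambda_{n-1}(G) |x|^2 <= x^* G x, and
   x^* G x <= x^* W x + (3/2) |x|^2 <= (mu + 3/2) |x|^2 (removing the
   nonnegative diagonal of W only lowers x^* W x).  Finally 3/2 <= 2 sqrt n.
   Eigenvectors come from the complex spectral theorem, so vectors live in C^n. *)

From HB Require Import structures.
From mathcomp Require Import all_boot all_order all_algebra.
From mathcomp Require Import boolp classical_sets reals.
From mathcomp Require Import complex sesquilinear spectral.
From mathcomp Require Import ring lra zify.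
Import Order.TTheory GRing.Theory Num.Theory.
Local Open Scope ring_scope.

Set Implicit Arguments. Unset Strict Implicit. Unset Printing Implicit Defensive.

Local Notation "x %:C" := (real_complex _ x) : ring_scope.
Local Notation Re := (@complex.Re _).
Local Notation Im := (@complex.Im _).

Section ComplexSqrNorm.
Variable R : realType.
Local Notation C := R[i].
Implicit Types z w c m : C.

Definition normc2 (z : C) : R := Re z ^+ 2 + Im z ^+ 2.

Lemma normc2_ge0 z : 0 <= normc2 z.
Proof. by rewrite addr_ge0 ?sqr_ge0. Qed.

Lemma normc20 : normc2 0 = 0.
Proof. by rewrite /normc2 /= expr0n addr0. Qed.

Lemma normc2_gt0 z : z != 0 -> 0 < normc2 z.
Proof.
move=> nz; rewrite lt_def normc2_ge0 andbT; apply: contra nz.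
case: z => a b; rewrite /normc2 /= paddr_eq0 ?sqr_ge0 // !sqrf_eq0.
by case/andP => /eqP -> /eqP ->.
Qed.

Lemma ReD z w : Re (z + w) = Re z + Re w.
Proof. exact: (@raddfD _ _ (@complex.Re R : Rcomplex R -> R)). Qed.

Lemma ReB z w : Re (z - w) = Re z - Re w.
Proof. exact: (@raddfB _ _ (@complex.Re R : Rcomplex R -> R)). Qed.

Lemma Re_sum (I : finType) (F : I -> C) : Re (\sum_i F i) = \sum_i Re (F i).
Proof. exact: (@raddf_sum _ _ (@complex.Re R : Rcomplex R -> R)). Qed.

Lemma Re_realM (a : R) z : Re (a%:C * z) = a * Re z.
Proof. by case: z => x y /=; ring. Qed.

Lemma Re_mulJ z : Re (z * z^*) = normc2 z.
Proof. by case: z => x y; rewrite /normc2 /=; ring. Qed.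

Lemma normc2_mulJ z w : normc2 (z * w^*) = normc2 z * normc2 w.
Proof. by case: z => x y; case: w => p q; rewrite /normc2 /=; ring. Qed.

Lemma normc2D_le z w : normc2 (z + w) <= 2 * normc2 z + 2 * normc2 w.
Proof.
have -> : 2 * normc2 z + 2 * normc2 w = normc2 (z + w) + normc2 (z - w).
  by case: z => x y; case: w => p q; rewrite /normc2 /=; ring.
by rewrite lerDl normc2_ge0.
Qed.

Lemma normc2_addZ z c (s : R) :
  normc2 (z + s%:C * c) = normc2 z + 2 * s * Re (z * c^*) + s ^+ 2 * normc2 c.
Proof. by case: z => x y; case: c => p q; rewrite /normc2 /=; ring. Qed.

Lemma Re_mul_le (N : R) z m : 2 * N * Re (z * m) <= normc2 z + N ^+ 2 * normc2 m.
Proof.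
rewrite -subr_ge0; have -> : normc2 z + N ^+ 2 * normc2 m - 2 * N * Re (z * m) =
    normc2 (z^* - N%:C * m).
  by case: z => x y; case: m => p q; rewrite /normc2 /=; ring.
exact: normc2_ge0.
Qed.

End ComplexSqrNorm.

Section Forms.
Variables (R : realType) (n : nat).
Local Notation C := R[i].
Implicit Types (x y : 'I_n -> C) (A B : 'M[R]_n) (Q : 'M[C]_n).

Definition sesq x A y : C := \sum_k \sum_l x k * (A k l)%:C * (y l)^*.

Definition sqnorm x : R := \sum_k normc2 (x k).

Definition lincomb (I : finType) (w : I -> C) (u : I -> 'I_n -> C) k : C :=
  \sum_i w i * u i k.

Definition orthonormal_family (I : finType) (u : I -> 'I_n -> C) :=
  forall i j, \sum_k u i k * (u j k)^* = (i == j)%:R.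

Definition mxcoord Q x i : C := \sum_k x k * (Q i k)^*.

(* [A = Q^* diag(e) Q] with [Q] unitary. *)
Definition eigendecomp A Q (e : 'I_n -> R) :=
  [/\ orthonormal_family Q, orthonormal_family (fun k i => (Q i k)^*)
    & forall k l, (A k l)%:C = \sum_i (Q i k)^* * (e i)%:C * Q i l].

Lemma sesqD x y A B : sesq x (A + B) y = sesq x A y + sesq x B y.
Proof.
rewrite /sesq -big_split; apply: eq_bigr => k _; rewrite -big_split.
by apply: eq_bigr => l _; rewrite mxE rmorphD /=; ring.
Qed.

Lemma sesqB x y A B : sesq x (A - B) y = sesq x A y - sesq x B y.
Proof.
rewrite /sesq -sumrB; apply: eq_bigr => k _; rewrite -sumrB.
by apply: eq_bigr => l _; rewrite !mxE rmorphB /=; ring.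
Qed.

Lemma sesq_diag x y (d : 'rV[R]_n) :
  sesq x (diag_mx d) y = \sum_k x k * (d 0 k)%:C * (y k)^*.
Proof.
apply: eq_bigr => k _; rewrite (bigD1 k) //= big1 => [|l /negbTE lk]; last first.
  by rewrite !mxE eq_sym lk mulr0n mulr0 mul0r.
by rewrite !mxE eqxx mulr1n addr0.
Qed.

Lemma sesq1 x y : sesq x 1%:M y = \sum_k x k * (y k)^*.
Proof.
rewrite -diag_const_mx sesq_diag; apply: eq_bigr => k _.
by rewrite mxE rmorph1 mulr1.
Qed.

Lemma Re_sesq1 x : Re (sesq x 1%:M x) = sqnorm x.
Proof. by rewrite sesq1 Re_sum; apply: eq_bigr => k _; rewrite Re_mulJ. Qed.

Lemma sqnorm_orthonormal (I : finType) (u : I -> 'I_n -> C) i :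
  orthonormal_family u -> sqnorm (u i) = 1.
Proof. by move=> ortho_u; rewrite -Re_sesq1 sesq1 ortho_u eqxx. Qed.

Lemma Re_sesq_diag x (d : 'rV[R]_n) :
  Re (sesq x (diag_mx d) x) = \sum_k d 0 k * normc2 (x k).
Proof.
rewrite sesq_diag Re_sum; apply: eq_bigr => k _.
by rewrite mulrAC mulrC Re_realM Re_mulJ.
Qed.

Lemma sesq_lincomb (I : finType) (w : I -> C) u A :
  sesq (lincomb w u) A (lincomb w u) =
  \sum_(r : I * I) w r.1 * (w r.2)^* * sesq (u r.1) A (u r.2).
Proof.
apply/esym; under eq_bigr => r _ do rewrite mulr_sumr.
under eq_bigr => r _ do under eq_bigr => k _ do rewrite mulr_sumr.
rewrite exchange_big; apply: eq_bigr => k _; rewrite exchange_big; apply: eq_bigr => l _.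
rewrite /lincomb rmorph_sum mulr_suml big_distrlr pair_big /=; apply: eq_bigr => r _ /=.
by rewrite rmorphM; ring.
Qed.

Lemma sqnorm_lincomb (I : finType) (w : I -> C) u :
  orthonormal_family u -> sqnorm (lincomb w u) = \sum_i normc2 (w i).
Proof.
move=> ortho_u; rewrite -Re_sesq1 sesq_lincomb Re_sum.
rewrite -(pair_bigA _ (fun i j => Re (w i * (w j)^* * sesq (u i) 1%:M (u j)))).
apply: eq_bigr => i _; rewrite (bigD1 i) //= big1 => [|j /negbTE ji]; last first.
  by rewrite sesq1 ortho_u eq_sym ji mulr0.
by rewrite sesq1 ortho_u eqxx mulr1 addr0 Re_mulJ.
Qed.

Lemma mxcoord_lincomb Q (I : finType) (w : I -> C) u i :
  mxcoord Q (lincomb w u) i = \sum_j w j * mxcoord Q (u j) i.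
Proof.
rewrite /mxcoord /lincomb; under eq_bigr do rewrite mulr_suml.
by rewrite exchange_big; apply: eq_bigr => j _; rewrite mulr_sumr; apply: eq_bigr => k _; ring.
Qed.

Lemma sesq_eigen A Q e x y :
    (forall k l, (A k l)%:C = \sum_i (Q i k)^* * (e i)%:C * Q i l) ->
  sesq x A y = \sum_i (e i)%:C * mxcoord Q x i * (mxcoord Q y i)^*.
Proof.
move=> decA; rewrite /sesq.
under eq_bigr => k _ do under eq_bigr => l _ do rewrite decA mulr_sumr mulr_suml.
under eq_bigr => k _ do rewrite exchange_big.
rewrite exchange_big; apply: eq_bigr => i _.
rewrite /mxcoord rmorph_sum -mulrA big_distrlr mulr_sumr; apply: eq_bigr => k _.
rewrite mulr_sumr; apply: eq_bigr => l _; rewrite rmorphM /= conjCK; ring.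
Qed.

Lemma Re_sesq_eigen A Q e x :
    (forall k l, (A k l)%:C = \sum_i (Q i k)^* * (e i)%:C * Q i l) ->
  Re (sesq x A x) = \sum_i e i * normc2 (mxcoord Q x i).
Proof.
move=> /sesq_eigen ->; rewrite Re_sum; apply: eq_bigr => i _.
by rewrite -mulrA Re_realM Re_mulJ.
Qed.

Lemma sqnorm_mxcoord Q x :
  orthonormal_family (fun k i => (Q i k)^*) -> sqnorm x = \sum_i normc2 (mxcoord Q x i).
Proof.
move=> ortho_Q; rewrite -Re_sesq1 (@Re_sesq_eigen _ Q (fun=> 1)) => [|k l].
  by apply: eq_bigr => i _; rewrite mul1r.
rewrite mxE rmorph_nat -ortho_Q; apply: eq_bigr => i _.
by rewrite rmorph1 mulr1 conjCK.
Qed.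

Lemma Re_sesq_lincomb_le (I : finType) (w : I -> C) u A :
    let N := \sum_i normc2 (w i) in 0 < N ->
  2 * Re (sesq (lincomb w u) A (lincomb w u))
    <= N * (1 + \sum_(r : I * I) normc2 (sesq (u r.1) A (u r.2))).
Proof.
move=> N N_gt0; rewrite sesq_lincomb Re_sum -(ler_pM2l N_gt0) mulr_sumr mulr_sumr.
have sum_ww : \sum_(r : I * I) normc2 (w r.1 * (w r.2)^*) = N ^+ 2.
  under eq_bigr do rewrite normc2_mulJ.
  by rewrite -(pair_bigA _ (fun i j => normc2 (w i) * normc2 (w j))) expr2 big_distrlr.
apply: le_trans (_ : _ <= \sum_(r : I * I) (normc2 (w r.1 * (w r.2)^*)
                     + N ^+ 2 * normc2 (sesq (u r.1) A (u r.2)))) _.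
  by apply: ler_sum => r _; rewrite mulrA [N * 2]mulrC; apply: Re_mul_le.
by rewrite big_split /= sum_ww -mulr_sumr mulrA -expr2 mulrDr mulr1.
Qed.

End Forms.

Lemma char_poly_conj (F : fieldType) n (P A : 'M[F]_n) : P \in unitmx ->
  char_poly (invmx P *m A *m P) = char_poly A.
Proof.
move=> Pu; rewrite /char_poly /char_poly_mx.
have eX : 'X%:M = map_mx (@polyC F) (invmx P) *m 'X%:M *m map_mx (@polyC F) P.
  by rewrite scalar_mxC -mulmxA -map_mxM mulVmx // map_mx1 mulmx1.
rewrite !map_mxM {1}eX -mulmxBl -mulmxBr !det_mulmx mulrC mulrA.
by rewrite !det_map_mx -rmorphM -det_mulmx mulmxV // det1 rmorph1 mul1r.
Qed.

Section SymmetricSpectral.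
Variables (R : realType) (n : nat).
Local Notation C := R[i].

Lemma symmetric_eigendecomp (A : 'M[R]_n) : A^T = A ->
  exists (Q : 'M[C]_n) (e : 'I_n -> R),
    eigendecomp A Q e /\ char_poly A = \prod_i ('X - (e i)%:P).
Proof.
move=> symA; pose Ac := map_mx (real_complex R) A.
have herm_Ac : Ac \is hermsymmx.
  apply/is_hermitianmxP; rewrite expr0 scale1r; apply/matrixP => k l.
  by rewrite !mxE -[in LHS]symA mxE; apply/esym/CrealP/complex_realP; eexists.
pose Q := spectralmx Ac; pose D := spectral_diag Ac.
have unit_Q : Q \is unitarymx by apply: spectral_unitarymx.
have decAc : Ac = invmx Q *m diag_mx D *m Q.
  by apply/orthomx_spectralP/hermitian_normalmx.
have realD : D \is a realmx by apply: hermitian_spectral_diag_real.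
have real_D i : (Re (D 0 i))%:C = D 0 i by apply: RRe_real; apply: (mxOverP realD).
exists Q, (fun i => Re (D 0 i)); split; first split.
- move=> i j; have /matrixP/(_ i j) := unitarymxP unit_Q.
  by rewrite !mxE => <-; apply: eq_bigr => k _; rewrite !mxE.
- move=> k l; have := mulVmx (unitarymx_unit unit_Q); rewrite invmx_unitary //.
  move=> /matrixP/(_ k l); rewrite !mxE => <-.
  by apply: eq_bigr => i _; rewrite !mxE conjCK.
- move=> k l; have -> : (A k l)%:C = Ac k l by rewrite mxE.
  rewrite decAc invmx_unitary // mul_mx_diag !mxE.
  by apply: eq_bigr => i _; rewrite !mxE real_D.
- apply: (@map_poly_inj _ _ (real_complex R)).
  rewrite map_char_poly -/Ac decAc char_poly_conj ?unitarymx_unit //.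
  rewrite char_poly_trig ?diag_mx_is_trig // rmorph_prod.
  apply: eq_bigr => i _; rewrite rmorphB /= map_polyX map_polyC /= real_D.
  by rewrite !mxE eqxx mulr1n.
Qed.

Lemma spectrum_char_poly (A : 'M[R]_n) (e : 'I_n -> R) :
    char_poly A = \prod_i ('X - (e i)%:P) ->
  sorted (fun x y : R => y <= x) (spectrum A) /\
  perm_eq (spectrum A) [seq e i | i <- enum 'I_n].
Proof.
have ge_total : total (fun x y : R => y <= x) by move=> x y; apply: le_total.
move=> charA; have {}charA : char_poly A = \prod_(x <- [seq e i | i <- enum 'I_n]) ('X - x%:P).
  by rewrite big_map big_enum.
have [s spec_s] : exists s, is_spectrum A s.
  exists (sort (fun x y : R => y <= x) [seq e i | i <- enum 'I_n]).
  split; first exact: sort_sorted.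
  by rewrite charA; apply: perm_big; rewrite perm_sym perm_sort.
have [sorted_spec char_spec] : is_spectrum A (spectrum A).
  by rewrite /spectrum; case: pselect => [ex|[]]; [case: (cid ex) | exists s].
by split => //; apply: prod_XsubC_eq; rewrite -char_spec.
Qed.

End SymmetricSpectral.

Section SortedCount.
Variable R : numDomainType.
Implicit Type s : seq R.

Lemma sorted_ge_nth s i j : sorted (fun x y : R => y <= x) s ->
  (i <= j < size s)%N -> nth 0 s j <= nth 0 s i.
Proof.
move=> sorted_s /andP[le_ij lt_js].
have ge_trans : transitive (fun x y : R => y <= x).
  by move=> y x z /= le_yx le_zy; apply: le_trans le_zy le_yx.
apply: (sorted_leq_nth ge_trans (@lexx _ _)) => //.
by rewrite inE (leq_ltn_trans le_ij).
Qed.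

Lemma count_le_nth_sorted s k : sorted (fun x y : R => y <= x) s -> (k < size s)%N ->
  (size s - k <= count (fun x => (x <= nth 0 s k)%R) s)%N.
Proof.
move=> sorted_s lt_ks; rewrite -{1 3}(cat_take_drop k s) count_cat size_cat.
have /eqP -> : count (fun x => (x <= nth 0 s k)%R) (drop k s) == size (drop k s).
  rewrite -all_count; apply/(all_nthP 0) => i; rewrite size_drop nth_drop => lt_i.
  by apply: sorted_ge_nth; rewrite // leq_addr -ltn_subRL.
by rewrite size_take lt_ks addKn leq_addl.
Qed.

Lemma count_lt_nth_sorted s k : sorted (fun x y : R => y <= x) s -> (k < size s)%N ->
  (count (fun x => (x < nth 0 s k)%R) s <= size s - k.+1)%N.
Proof.
move=> sorted_s lt_ks; rewrite -{2}(cat_take_drop k.+1 s) count_cat.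
have -> : count (fun x => (x < nth 0 s k)%R) (take k.+1 s) = 0%N.
  apply/eqP; rewrite -leqn0 leqNgt -has_count; apply/negP; case/(has_nthP 0) => i.
  rewrite size_takel // ltnS => le_ik.
  by rewrite nth_take // le_gtF // sorted_ge_nth // le_ik.
by rewrite add0n (leq_trans (count_size _ _)) // size_drop.
Qed.

End SortedCount.

Lemma count_enum (T : finType) (a : pred T) : count a (enum T) = #|a|.
Proof. by rewrite enumT cardE /enum_mem size_filter. Qed.

Lemma exists_bool_lincomb_eq0 (R : realType) (a : bool -> R[i]) :
  exists w : bool -> R[i], 0 < \sum_b normc2 (w b) /\ \sum_b w b * a b = 0.
Proof.
have [a0|a_neq0] := eqVneq (a false) 0.
  exists (fun b => (~~ b)%:R); rewrite !big_bool /= a0 mul0r mulr0 addr0.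
  by rewrite normc20 add0r normc2_gt0 ?oner_neq0.
exists (fun b => if b then a false else - a true); rewrite !big_bool /=.
split; last by rewrite mulNr mulrC subrr.
by rewrite ltr_wpDr ?normc2_ge0 ?normc2_gt0.
Qed.

Section CourantFischer.
Variables (R : realType) (n : nat).
Hypothesis n_ge2 : (2 <= n)%N.
Local Notation C := R[i].

Lemma card_eigen_le_lambda (A : 'M[R]_n) (e : 'I_n -> R) :
    char_poly A = \prod_i ('X - (e i)%:P) ->
  (1 < #|[pred i | (e i <= lambda n.-1 A)%R]|)%N.
Proof.
move=> /spectrum_char_poly [sorted_sp perm_sp].
have size_sp : size (spectrum A) = n.
  by rewrite (perm_size perm_sp) size_map size_enum_ord.
have lt_n2 : (n.-2 < size (spectrum A))%N by rewrite size_sp; lia.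
have := count_le_nth_sorted sorted_sp lt_n2.
rewrite (permP perm_sp) count_map count_enum size_sp => le_card.
by apply: leq_trans le_card; lia.
Qed.

Lemma card_eigen_lt_lambda (A : 'M[R]_n) (e : 'I_n -> R) :
    char_poly A = \prod_i ('X - (e i)%:P) ->
  (#|[pred i | (e i < lambda n.-1 A)%R]| <= 1)%N.
Proof.
move=> /spectrum_char_poly [sorted_sp perm_sp].
have size_sp : size (spectrum A) = n.
  by rewrite (perm_size perm_sp) size_map size_enum_ord.
have lt_n2 : (n.-2 < size (spectrum A))%N by rewrite size_sp; lia.
have := count_lt_nth_sorted sorted_sp lt_n2.
rewrite (permP perm_sp) count_map count_enum size_sp => le_card.
by apply: leq_trans le_card _; lia.
Qed.

Lemma sesq_le_lambda_on_eigenspan (A : 'M[R]_n) : A^T = A ->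
  exists u : bool -> 'I_n -> C, orthonormal_family u /\
    forall w, Re (sesq (lincomb w u) A (lincomb w u)) <= lambda n.-1 A * \sum_b normc2 (w b).
Proof.
move=> /symmetric_eigendecomp [Q [e [[ortho_Q ortho_Qt decA] charA]]].
have /card_gt1P [k1 [k2 [le_k1 le_k2 k12]]] := card_eigen_le_lambda charA.
pose k (b : bool) := if b then k1 else k2.
have k_inj : injective k by case; case=> //= eq_k; rewrite eq_k eqxx in k12.
have le_k b : e (k b) <= lambda n.-1 A by case: b.
pose u b := Q (k b); have ortho_u : orthonormal_family u.
  by move=> b b'; rewrite ortho_Q (inj_eq k_inj).
exists u; split=> // w.
rewrite (Re_sesq_eigen _ decA) -(sqnorm_lincomb w ortho_u) (sqnorm_mxcoord _ ortho_Qt).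
rewrite mulr_sumr.
apply: ler_sum => i _; have [le_ei|lt_ei] := leP (e i) (lambda n.-1 A).
  by rewrite ler_wpM2r ?normc2_ge0.
have -> : mxcoord Q (lincomb w u) i = 0.
  rewrite mxcoord_lincomb big1 // => b _; rewrite /mxcoord ortho_Q.
  by case: eqP (le_k b) => [->|_]; rewrite ?mulr0 // leNgt lt_ei.
by rewrite normc20 !mulr0.
Qed.

Lemma lambda_le_sesq_on_span (A : 'M[R]_n) (u : bool -> 'I_n -> C) :
    A^T = A -> orthonormal_family u ->
  exists w : bool -> C, 0 < \sum_b normc2 (w b) /\
    lambda n.-1 A * \sum_b normc2 (w b) <= Re (sesq (lincomb w u) A (lincomb w u)).
Proof.
move=> /symmetric_eigendecomp [Q [e [[ortho_Q ortho_Qt decA] charA]]] ortho_u.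
have /card_le1_eqP lt_uniq := card_eigen_lt_lambda charA.
have [m ge_e] : exists m, forall i, i != m -> lambda n.-1 A <= e i.
  case: (pickP [pred i | e i < lambda n.-1 A]) => [m lt_m | ge_all].
    by exists m => i; apply: contraNT; rewrite -ltNge => lt_i; apply/eqP/lt_uniq.
  by exists (Ordinal (ltnW n_ge2)) => i _; rewrite leNgt; apply/negbT/ge_all.
have [w [N_gt0 coord_m]] := exists_bool_lincomb_eq0 (fun b => mxcoord Q (u b) m).
exists w; split=> //.
rewrite (Re_sesq_eigen _ decA) -(sqnorm_lincomb w ortho_u) (sqnorm_mxcoord _ ortho_Qt).
rewrite mulr_sumr; apply: ler_sum => i _; have [->|ne_im] := eqVneq i m.
  by rewrite mxcoord_lincomb coord_m normc20 !mulr0.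
by rewrite ler_wpM2r ?normc2_ge0 ?ge_e.
Qed.

End CourantFischer.

Section EdgeWeights.
Variables (R : realType) (n : nat).
Local Notation C := R[i].
Implicit Types (u v : 'I_n -> C) (y : 'I_n * 'I_n -> R).

(* Only the weights [y (k, l)] with [k < l] are used. *)
Definition edge_mx y : 'M[R]_n :=
  \matrix_(k, l) if (k < l)%N then y (k, l) else if (l < k)%N then y (l, k) else 0.

Definition edge_coef u v (e : 'I_n * 'I_n) : C :=
  if (e.1 < e.2)%N then u e.1 * (v e.2)^* + u e.2 * (v e.1)^* else 0.

Lemma sum_lt_swap (V : nmodType) (F : 'I_n -> 'I_n -> V) :
  \sum_(k < n) \sum_(l < n) (if (l < k)%N then F l k else 0) =
  \sum_(k < n) \sum_(l < n) (if (k < l)%N then F k l else 0).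
Proof. exact: exchange_big. Qed.

Lemma sesq_edge_mx u v y : sesq u (edge_mx y) v = \sum_e (y e)%:C * edge_coef u v e.
Proof.
have -> : \sum_e (y e)%:C * edge_coef u v e =
    \sum_k \sum_l (y (k, l))%:C * edge_coef u v (k, l).
  by rewrite pair_bigA; apply: eq_bigr => -[k l].
pose F k l := (y (k, l))%:C * (u k * (v l)^*).
pose F' k l := (y (k, l))%:C * (u l * (v k)^*).
have split_entry k l : u k * (edge_mx y k l)%:C * (v l)^* =
    (if (k < l)%N then F k l else 0) + (if (l < k)%N then F' l k else 0).
  by rewrite /F /F' mxE; case: ltngtP => _; rewrite ?rmorph0; ring.
rewrite /sesq; under eq_bigr do under eq_bigr do rewrite split_entry.
under eq_bigr do rewrite big_split /=.
rewrite big_split /= sum_lt_swap -big_split /=; apply: eq_bigr => k _.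
rewrite -big_split; apply: eq_bigr => l _ /=.
by rewrite /edge_coef /=; case: ifP => _; rewrite /F /F' ?mulr0 ?addr0 // mulrDr.
Qed.

Lemma sum_normc2_edge_coef u v : sqnorm u = 1 -> sqnorm v = 1 ->
  \sum_e normc2 (edge_coef u v e) <= 2.
Proof.
move=> norm_u norm_v; pose f k l := 2 * (normc2 (u k) * normc2 (v l)).
have f_ge0 k l : 0 <= f k l by rewrite mulr_ge0 ?mulr_ge0 ?normc2_ge0.
have -> : \sum_e normc2 (edge_coef u v e) = \sum_k \sum_l normc2 (edge_coef u v (k, l)).
  by rewrite pair_bigA; apply: eq_bigr => -[k l].
apply: le_trans (_ : _ <= \sum_(k < n) \sum_(l < n)
    ((if (k < l)%N then f k l else 0) + (if (k < l)%N then f l k else 0))) _.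
  apply: ler_sum => k _; apply: ler_sum => l _; rewrite /edge_coef /=.
  case: ifP => _; last by rewrite normc20 addr0.
  by rewrite /f -!normc2_mulJ normc2D_le.
under eq_bigr do rewrite big_split /=.
rewrite big_split /= -(sum_lt_swap (fun k l => f l k)) -big_split /=.
apply: le_trans (_ : _ <= \sum_(k < n) \sum_(l < n) f k l) _.
  apply: ler_sum => k _; rewrite -big_split; apply: ler_sum => l _ /=.
  by case: ltngtP => _; rewrite ?addr0 ?add0r.
under eq_bigr do rewrite -mulr_sumr; rewrite -mulr_sumr -big_distrlr /=.
by rewrite -/(sqnorm u) -/(sqnorm v) norm_u norm_v !mulr1.
Qed.

Lemma edge_mx_tr y : (edge_mx y)^T = edge_mx y.
Proof. by apply/matrixP => k l; rewrite !mxE; case: ltngtP. Qed.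

Lemma edge_mx_diag_split (W : 'M[R]_n) :
  W^T = W -> W = edge_mx (fun e => W e.1 e.2) + diag_mx (\row_k W k k).
Proof.
move=> symW; apply/matrixP => k l; rewrite !mxE.
case: ltngtP => [lt_kl|lt_lk|/val_inj <-]; last by rewrite eqxx add0r.
  by rewrite -val_eqE (ltn_eqF lt_kl) addr0.
by rewrite -val_eqE (gtn_eqF lt_lk) addr0 -{1}symW mxE.
Qed.

Definition graph_of_edges y : 'M[bool]_n := \matrix_(k, l) (edge_mx y k l == 1).

Lemma simple_graph_of_edges y : simple_graph (graph_of_edges y).
Proof.
apply/andP; split.
  by apply/eqP/matrixP => k l; rewrite !mxE; case: ltngtP.
by apply/forallP => k; rewrite !mxE ltnn eq_sym oner_eq0.
Qed.

Lemma adj_graph_of_edges y : (forall e, y e = 0 \/ y e = 1) ->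
  adj R (graph_of_edges y) = edge_mx y.
Proof.
move=> y01; apply/matrixP => k l.
have entry01 : edge_mx y k l = 0 \/ edge_mx y k l = 1.
  by rewrite mxE; case: ltngtP => _; auto.
rewrite mxE /graph_of_edges mxE.
by case: entry01 => ->; rewrite ?eqxx // eq_sym oner_eq0.
Qed.

End EdgeWeights.

Section Rounding.
Variables (R : realType) (E I : finType) (c : I -> E -> R[i]) (b : I -> R[i]).

Definition round_err (y : E -> R) : R :=
  \sum_r normc2 (\sum_e (y e)%:C * c r e - b r).

Lemma round_err_update y e0 t :
  round_err (fun e => if e == e0 then t else y e) =
    round_err y
    + 2 * (t - y e0) * \sum_r Re ((\sum_e (y e)%:C * c r e - b r) * (c r e0)^*)
    + (t - y e0) ^+ 2 * \sum_r normc2 (c r e0).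
Proof.
rewrite /round_err !mulr_sumr -!big_split; apply: eq_bigr => r _ /=.
have -> : \sum_e (if e == e0 then t else y e)%:C * c r e - b r =
    (\sum_e (y e)%:C * c r e - b r) + (t - y e0)%:C * c r e0.
  rewrite (bigD1 e0) //= [in RHS](bigD1 e0) //= eqxx.
  rewrite (eq_bigr (fun e => (y e)%:C * c r e)) => [|e /negbTE -> //].
  by rewrite rmorphB /=; ring.
by rewrite normc2_addZ.
Qed.

(* Rounding [y e0] to 1 with probability [y e0] raises [round_err] by
   [y e0 (1 - y e0) \sum_r normc2 (c r e0)] on average. *)
Lemma round_err_round_one y e0 : 0 <= y e0 <= 1 ->
  exists t, (t = 0 \/ t = 1) /\
    round_err (fun e => if e == e0 then t else y e)
      <= round_err y + (\sum_r normc2 (c r e0)) / 4.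
Proof.
move=> /andP[y_ge0 y_le1]; pose yt t e := if e == e0 then t else y e.
have A_ge0 : 0 <= \sum_r normc2 (c r e0) by apply: sumr_ge0 => r _; apply: normc2_ge0.
have avg : (1 - y e0) * round_err (yt 0) + y e0 * round_err (yt 1) =
    round_err y + y e0 * (1 - y e0) * \sum_r normc2 (c r e0).
  by rewrite !round_err_update; ring.
have var_le : y e0 * (1 - y e0) * \sum_r normc2 (c r e0) <= (\sum_r normc2 (c r e0)) / 4.
  by have := sqr_ge0 (y e0 - 1 / 2); nra.
have [le_01|lt_10] := lerP (round_err (yt 0)) (round_err (yt 1)).
- exists 0; split; first by left.
  have : 0 <= y e0 * (round_err (yt 1) - round_err (yt 0)) by rewrite mulr_ge0 ?subr_ge0.
  nra.
- exists 1; split; first by right.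
  have : 0 <= (1 - y e0) * (round_err (yt 0) - round_err (yt 1)).
    by rewrite mulr_ge0 ?subr_ge0 // ltW.
  nra.
Qed.

Lemma round_err_round_set (S : {set E}) y :
    (forall e, 0 <= y e <= 1) -> (forall e, e \notin S -> y e = 0 \/ y e = 1) ->
  exists y', (forall e, y' e = 0 \/ y' e = 1) /\
    round_err y' <= round_err y + (\sum_(e in S) \sum_r normc2 (c r e)) / 4.
Proof.
have [k] := ubnP #|S|; elim: k S y => // k IH S y card_S y01 y01_out.
have [S0|[e0 e0S]] := set_0Vmem S.
  exists y; split=> [e|]; first by apply: y01_out; rewrite S0 inE.
  by rewrite S0 big_set0 mul0r addr0.
have [t [t01 err_t]] := round_err_round_one (y01 e0).
pose yt e := if e == e0 then t else y e.
have yt01 e : 0 <= yt e <= 1.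
  by rewrite /yt; case: eqP => _ //; case: t01 => ->; rewrite ?lexx ?ler01.
have yt01_out e : e \notin S :\ e0 -> yt e = 0 \/ yt e = 1.
  by rewrite /yt !inE negb_and negbK; case: eqP => // _ /= /y01_out.
have card_S' : (#|S :\ e0| < k)%N by move: card_S; rewrite (cardsD1 e0 S) e0S.
have [y' [y'01 err_y']] := IH _ yt card_S' yt01 yt01_out.
exists y'; split=> //; apply: le_trans err_y' _.
move: err_t; rewrite (big_setD1 e0 e0S) /= -/yt; lra.
Qed.

Lemma exists_01_rounding y : (forall e, 0 <= y e <= 1) ->
  exists y', (forall e, y' e = 0 \/ y' e = 1) /\
    round_err y' <= round_err y + (\sum_e \sum_r normc2 (c r e)) / 4.
Proof.
move=> y01; case: (@round_err_round_set [set: E] y y01) => [e|y' [y'01 err_y']].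
  by rewrite inE.
exists y'; split=> //; move: err_y'; congr (_ <= _ + _ / _).
by apply: eq_bigl => e; rewrite inE.
Qed.

End Rounding.

Lemma edge_rounding (R : realType) n (I : finType) (u : I -> 'I_n -> R[i])
    (y : 'I_n * 'I_n -> R) :
    (forall i, sqnorm (u i) = 1) -> (forall e, 0 <= y e <= 1) ->
  exists y', (forall e, y' e = 0 \/ y' e = 1) /\
    \sum_(r : I * I) normc2 (sesq (u r.1) (edge_mx y' - edge_mx y) (u r.2))
      <= #|{: I * I}|%:R / 2.
Proof.
move=> unit_u y01; pose c (r : I * I) := edge_coef (u r.1) (u r.2).
pose b (r : I * I) := sesq (u r.1) (edge_mx y) (u r.2).
have err_edge y' : round_err c b y' =
    \sum_(r : I * I) normc2 (sesq (u r.1) (edge_mx y' - edge_mx y) (u r.2)).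
  by apply: eq_bigr => r _; rewrite sesqB sesq_edge_mx.
have [y' [y'01 err_y']] := exists_01_rounding c b y01.
exists y'; split=> //; rewrite -err_edge; apply: le_trans err_y' _.
have err0 : round_err c b y = 0.
  by rewrite /round_err big1 // => r _; rewrite /b sesq_edge_mx subrr normc20.
have : \sum_r \sum_e normc2 (c r e) <= \sum_(r : I * I) 2.
  by apply: ler_sum => r _; apply: sum_normc2_edge_coef.
rewrite err0 add0r exchange_big sumr_const -mulr_natr; lra.
Qed.

Lemma lambda_pen_rounding (R : realType) n (W : 'M[R]_n) : (2 <= n)%N ->
    W^T = W -> (forall i j, 0 <= W i j <= 1) ->
  exists g : 'M[bool]_n, simple_graph g /\ lambda n.-1 (adj R g) <= lambda n.-1 W + 3 / 2.
Proof.
move=> n_ge2 symW W01.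
have [u [ortho_u le_W]] := sesq_le_lambda_on_eigenspan n_ge2 symW.
have [y' [y'01 err_y']] := edge_rounding (fun b => sqnorm_orthonormal b ortho_u)
  (fun e => W01 e.1 e.2).
set y := fun e => W e.1 e.2 in err_y'.
exists (graph_of_edges y'); split; first exact: simple_graph_of_edges.
rewrite adj_graph_of_edges //.
have [w [N_gt0 le_G]] := lambda_le_sesq_on_span n_ge2 (edge_mx_tr y') ortho_u.
set x := lincomb w u in le_G; set N := \sum_b normc2 (w b) in N_gt0 le_G.
have err_x : 2 * Re (sesq x (edge_mx y' - edge_mx y) x) <= N * (1 + 2).
  apply: le_trans (@Re_sesq_lincomb_le _ _ _ w u _ N_gt0) _.
  apply: ler_wpM2l; first exact: ltW.
  by move: err_y'; rewrite card_prod card_bool natrM; lra.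
have diag_ge0 : 0 <= Re (sesq x (diag_mx (\row_k W k k)) x).
  rewrite Re_sesq_diag; apply: sumr_ge0 => k _.
  by rewrite mxE mulr_ge0 ?normc2_ge0 //; case/andP: (W01 k k).
have := le_W w; rewrite -/x -/N {1}(edge_mx_diag_split symW) sesqD ReD -/y.
move: err_x; rewrite sesqB ReB => err_x le_Wx.
rewrite -(ler_pM2r N_gt0); lra.
Qed.

Local Open Scope classical_set_scope.

Theorem theorem1p7 (R : realType) (n : nat) (hn : (2 <= n)%N) :
  min_graph_lambda R n n.-1 - 2 * Num.sqrt (n%:R : R)
    <= inf [set lambda n.-1 W | W in @weighted_graphs R n].
Proof.
apply: lb_le_inf.
  exists (lambda n.-1 (0 : 'M[R]_n)), 0 => //.
  by split; [rewrite trmx0 | move=> i j; rewrite mxE lexx ler01].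
move=> _ [W [symW W01] <-]; have [g [simple_g le_g]] := lambda_pen_rounding hn symW W01.
have sqrt_n_ge1 : 1 <= Num.sqrt (n%:R : R).
  by rewrite -{1}sqrtr1 ler_sqrt // ler1n; apply: ltnW.
rewrite lerBlDr; apply: le_trans (_ : _ <= lambda n.-1 (adj R g)) _; last by lra.
exact: bigmin_le_cond.
Qed.
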